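(* Let $q\ge1$ be an integer and let $X$ be a random variable such that $qX$ is integer-valued almost surely. Then for every integer $r\ge1$ with $\mathbb E|X|^r<\infty$, \[ \mathbb E\big(\lfloor X\rfloor^r\big)=\mathrm i^{-r}\sum_{j=0}^{q-1}\frac{d^r}{dt^r}\big(h_q(t)\varphi_X(t)\big)\Big|_{t=2\pi j} \quad\text{and}\quad \mathbb E\big(\langle X\rangle^r\big)=\mathrm i^{-r}\sum_{j=0}^{q-1}\frac{d^r}{dt^r}\big(\tilde h_q(t)\varphi_X(t)\big)\Big|_{t=2\pi j}. \]
   Context: For a random variable $Y$, $\varphi_Y(t):=\mathbb E\, e^{\mathrm i tY}$ is its characteristic function. $\lfloor x\rfloor$ is $x$ rounded down to an integer, and $\langle x\rangle:=\lfloor x+\tfrac12\rfloor$ is $x$ rounded to the nearest integer, with ties broken upward. Define \[ h_q(t):=\frac1q\sum_{k=0}^{q-1}e^{-\mathrm i tk/q}. \] If $q$ is even, define $\tilde h_q(t):=\frac1q\sum_{k=-q/2}^{q/2-1}e^{-\mathrm i tk/q}$. If $q$ is odd, define $\tilde h_q(t):=\frac1q\sum_{k=-(q-1)/2}^{(q-1)/2}e^{-\mathrm i tk/q}$. *)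

From HB Require Import structures.
From mathcomp Require Import all_boot all_order all_algebra.
From mathcomp Require Import all_classical all_reals all_analysis.
From mathcomp Require Import complex.
Set Implicit Arguments. Unset Strict Implicit. Unset Printing Implicit Defensive.
Import Order.TTheory GRing.Theory Num.Theory.
Import numFieldNormedType.Exports.
Local Open Scope ring_scope.
Local Open Scope complex_scope.

Section Defs.
Variable R : realType.

Definition expi (x : R) : R[i] := cos x +i* sin x.

Definition h_q (q : nat) (t : R) : R[i] :=
  (q%:R^-1)%:C * \sum_(k < q) expi (- (t * k%:R / q%:R)).

(* tilde h_q(t) = (1/q) sum_{k} e^{-i t k / q}, where k ranges over
   -q/2 .. q/2-1 (q even) or -(q-1)/2 .. (q-1)/2 (q odd);
   written as k = j - q/2 resp. k = j - (q-1)/2 with j = 0..q-1. *)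
Definition ht_q (q : nat) (t : R) : R[i] :=
  if ~~ odd q then
    (q%:R^-1)%:C * \sum_(j < q) expi (- (t * ((j%:Z - (q %/ 2)%:Z)%:~R) / q%:R))
  else
    (q%:R^-1)%:C * \sum_(j < q) expi (- (t * ((j%:Z - ((q - 1) %/ 2)%:Z)%:~R) / q%:R)).

Definition charfun {d} {T : measurableType d} (P : probability T R) (X : T -> R)
  (t : R) : R[i] :=
  (fine ('E_P[fun w => cos (t * X w)])%E) +i* (fine ('E_P[fun w => sin (t * X w)])%E).

Definition cderive (n : nat) (f : R -> R[i]) (t : R) : R[i] :=
  (derive1n n (fun s => @complex.Re R (f s) : R) t) +i* (derive1n n (fun s => @complex.Im R (f s) : R) t).

End Defs.

(* Let [q X = N] be an integer and [m = floor (c q)] with [0 <= c < 1] ([c = 0] gives [floor X],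
   [c = 1/2] gives [<X>]).  Among the [q] numbers [X - (j - m)/q], [j < q], exactly one is an
   integer, namely [floor (X + c)], and the root-of-unity filter
   [\sum_(l < q) e^{2 pi i l y} = q [y \in Z]] (for [y \in Z/q]) picks it out.  Hence summing at
   [t = 2 pi l] the [r]-th [t]-derivative of [(1/q) \sum_j e^{i t (X - (j - m)/q)}] gives
   [i^r floor(X + c)^r].  Taking expectations, this derivative can be moved out of the integral,
   since all [t]-derivatives up to order [r] are dominated by [2^r (1 + |X|^r)], and the
   expectation of that sum is [h(t) phi_X(t)].  All computations are done on real and imaginary
   parts, i.e. with cosines of phase-shifted arguments. *)
From HB Require Import structures.
From mathcomp Require Import all_boot all_order all_algebra.
From mathcomp Require Import all_classical all_reals all_analysis.
From mathcomp Require Import complex.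
From mathcomp Require Import measurable_realfun.
From mathcomp Require Import lra ring.
Set Implicit Arguments. Unset Strict Implicit. Unset Printing Implicit Defensive.
Import Order.TTheory GRing.Theory Num.Theory.
Import numFieldNormedType.Exports.
Local Open Scope ring_scope.
Local Open Scope complex_scope.
Lemma is_derive_cos_affine (R : realType) (c y phi t : R) :
  is_derive t 1 (fun s => c * cos (s * y + phi)) (c * y * cos (t * y + phi + pi / 2)).
Proof.
have affine : is_derive t 1 (y \*: (@id R) + cst phi) (y *: 1 + 0) by exact: is_deriveD.
have -> : (fun s => c * cos (s * y + phi)) = c \*: (cos \o (y \*: (@id R) + cst phi)).
  by apply/funext => s /=; rewrite [s * y]mulrC.
eapply is_derive_eq; first exact: (is_deriveZ c (is_derive1_comp (is_derive_cos _) affine)).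
rewrite cosDpihalf [t * y]mulrC /=.
change (c * (- sin (y * t + phi) * (y * 1 + 0)) = c * y * - sin (y * t + phi)).
ring.
Qed.

Lemma exprD1_le (R : realType) (x : R) (n r : nat) : 0 <= x -> (n <= r)%N ->
  (x + 1) ^+ n <= 2 ^+ r * (1 + x ^+ r).
Proof.
move=> x_ge0 le_nr.
have xr_ge0 : 0 <= x ^+ r by exact: exprn_ge0.
have [x_le1|x_gt1] := lerP x 1.
- apply: (@le_trans _ _ (2 ^+ n)); first by apply: lerXn2r; rewrite ?nnegrE //; lra.
  apply: (@le_trans _ _ (2 ^+ r)); first by apply: ler_weXn2l => //; lra.
  by rewrite ler_peMr ?exprn_ge0 //; lra.
- apply: (@le_trans _ _ ((2 * x) ^+ n)); first by apply: lerXn2r; rewrite ?nnegrE //; lra.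
  rewrite exprMn; apply: (@le_trans _ _ (2 ^+ r * x ^+ r)).
    by apply: ler_pM; rewrite ?exprn_ge0 //; apply: ler_weXn2l => //; lra.
  by rewrite ler_pM2l ?exprn_gt0 //; lra.
Qed.

Section ComplexExponential.
Variable R : realType.

Lemma Re_sum (I : Type) (s : seq I) (z : I -> R[i]) :
  complex.Re (\sum_(i <- s) z i) = \sum_(i <- s) complex.Re (z i).
Proof. exact: (@raddf_sum _ _ (@complex.Re R : Rcomplex R -> R)). Qed.

Lemma sum_complex (I : Type) (s : seq I) (f g : I -> R) :
  \sum_(i <- s) (f i +i* g i) = (\sum_(i <- s) f i) +i* (\sum_(i <- s) g i).
Proof. by elim: s => [|a s IH]; rewrite ?big_nil // !big_cons IH. Qed.

Lemma expiD (a b : R) : expi (a + b) = expi a * expi b.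
Proof.
rewrite /expi cosD sinD -[(_ +i* _) * (_ +i* _)]/(_ +i* _).
by congr (_ +i* _); ring.
Qed.

Lemma expi0 : expi (0 : R) = 1.
Proof. by rewrite /expi cos0 sin0. Qed.

Lemma expi_natrM (n : nat) (a : R) : expi (n%:R * a) = expi a ^+ n.
Proof.
elim: n => [|n IH]; first by rewrite mul0r expi0 expr0.
by rewrite -addn1 natrD mulrDl mul1r expiD IH exprD expr1.
Qed.

Lemma expi_pihalf : expi (pi / 2 : R) = 'i%R.
Proof. by rewrite /expi cos_pihalf sin_pihalf. Qed.

Lemma expi_2piz (L : int) : expi (2 * pi * L%:~R : R) = 1.
Proof.
have expi_2pin (n : nat) : expi (2 * pi * n%:R : R) = 1.
  by rewrite mulrC expi_natrM /expi mulr_natl cos2pi sin2pi expr1n.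
case: L => n; first exact: expi_2pin.
apply: (mulIf (oner_neq0 _)); rewrite -[X in _ * X](expi_2pin n.+1) -expiD mul1r.
by rewrite -mulrDr NegzE intrN -pmulrn addNr mulr0 expi0.
Qed.

Lemma expi_neq1 (th : R) : 0 < th < 2 * pi -> expi th != 1.
Proof.
move=> /andP[th_gt0 th_lt2pi]; apply/negP => /eqP E.
have sin_th : sin th = 0 by move: (congr1 (@complex.Im R) E).
have cos_th : cos th = 1 by move: (congr1 (@complex.Re R) E).
have pi_gt0 : 0 < pi :> R by exact: pi_gt0.
have [th_ltpi|] := ltrP th pi.
  by move: (@sin_gt0_pi R th); rewrite th_gt0 th_ltpi sin_th ltxx => /(_ isT).
rewrite le_eqVlt => /orP[/eqP th_pi|th_gtpi].
  by move: cos_th; rewrite -th_pi cospi; lra.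
have := sinDpi (th - pi); rewrite subrK sin_th => /eqP; rewrite eq_sym oppr_eq0 => /eqP.
by apply/eqP; rewrite gt_eqF // sin_gt0_pi //; apply/andP; split; lra.
Qed.

Lemma sum_expr_unity (F : idomainType) (z : F) (n : nat) :
  z ^+ n = 1 -> z != 1 -> \sum_(i < n) z ^+ i = 0.
Proof.
move=> zn z_neq1; apply/eqP; have := subrX1 z n.
by rewrite zn subrr => /esym/eqP; rewrite mulf_eq0 subr_eq0 (negbTE z_neq1).
Qed.

(* [2 pi M / q] lies strictly between [2 pi floor(M/q)] and [2 pi (floor(M/q) + 1)]. *)
Lemma expi_2pi_frac_neq1 (q : nat) (M : int) : (0 < q)%N -> ~~ (q%:Z %| M)%Z ->
  expi (2 * pi * (M%:~R / q%:R) : R) != 1.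
Proof.
move=> q_gt0 ndvd.
have q_neq0 : (q%:R : R) != 0 by rewrite pnatr_eq0 -lt0n.
have -> : 2 * pi * (M%:~R / q%:R) = 2 * pi * ((M %/ q%:Z)%Z)%:~R
                                   + 2 * pi * (((M %% q%:Z)%Z)%:~R / q%:R) :> R.
  by rewrite {1}(divz_eq M q%:Z) intrD intrM -[(q%:Z)%:~R]/(q%:R); field.
rewrite expiD expi_2piz mul1r; apply: expi_neq1.
have rem_gt0 : (0 < M %% q%:Z)%Z.
  rewrite lt_neqAle modz_ge0 ?andbT; last by rewrite eqz_nat -lt0n.
  by rewrite eq_sym; apply: contra ndvd => /eqP/dvdz_mod0P.
have rem_ltq : (M %% q%:Z < q%:Z)%Z by rewrite ltz_pmod // ltz_nat.
have qR_gt0 : (0 : R) < q%:R by rewrite ltr0n.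
have pi_gt0 : 0 < pi :> R by exact: pi_gt0.
have frac_gt0 : 0 < ((M %% q%:Z)%Z)%:~R / q%:R :> R by rewrite divr_gt0 ?ltr0z.
have frac_lt1 : ((M %% q%:Z)%Z)%:~R / q%:R < 1 :> R.
  by rewrite ltr_pdivrMr // mul1r -[(q%:R : R)]/((q%:Z)%:~R) ltr_int.
apply/andP; split; first by apply: mulr_gt0 => //; lra.
by rewrite -[X in _ < X]mulr1 ltr_pM2l //; lra.
Qed.

Lemma sum_expi_root_unity (q : nat) (M : int) : (0 < q)%N ->
  \sum_(j < q) expi (2 * pi * j%:R * (M%:~R / q%:R) : R) =
  if (q%:Z %| M)%Z then (q%:R : R)%:C else 0.
Proof.
move=> q_gt0; set a := 2 * pi * (M%:~R / q%:R) : R.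
have q_neq0 : (q%:R : R) != 0 by rewrite pnatr_eq0 -lt0n.
have expi_ja (j : 'I_q) : expi (2 * pi * j%:R * (M%:~R / q%:R)) = expi a ^+ j.
  by rewrite -expi_natrM /a; congr expi; ring.
rewrite (eq_bigr _ (fun j _ => expi_ja j)).
case: ifPn => [/dvdzP[L M_eq]|ndvd].
  rewrite /a M_eq intrM -[(q%:Z)%:~R]/(q%:R) mulfK // expi_2piz.
  under eq_bigr do rewrite expr1n.
  by rewrite sumr_const card_ord (rmorph_nat (real_complex R)).
apply: sum_expr_unity; last exact: expi_2pi_frac_neq1.
rewrite -expi_natrM /a (_ : _ * _ = 2 * pi * M%:~R) ?expi_2piz //; by field.
Qed.

Lemma sum_cos_root_unity (q : nat) (M : int) (phi : R) : (0 < q)%N ->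
  \sum_(j < q) cos (2 * pi * j%:R * (M%:~R / q%:R) + phi) =
  if (q%:Z %| M)%Z then q%:R * cos phi else 0.
Proof.
move=> q_gt0.
have -> : \sum_(j < q) cos (2 * pi * j%:R * (M%:~R / q%:R) + phi) =
   complex.Re ((\sum_(j < q) expi (2 * pi * j%:R * (M%:~R / q%:R))) * expi phi).
  by rewrite mulr_suml Re_sum; apply: eq_bigr => j _; rewrite -expiD.
rewrite sum_expi_root_unity //; case: ifP => _; last by rewrite mul0r.
by rewrite /expi -[(_ +i* _) * (_ +i* _)]/(_ +i* _) /= mul0r subr0.
Qed.

End ComplexExponential.

Definition moment_majorant (R : realType) (r : nat) (x : R) : R := 2 ^+ r * (1 + `|x| ^+ r).

Lemma norm_floor_expr_le (R : realType) (c x : R) (r : nat) : 0 <= c < 1 ->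
  `|(Num.floor (x + c))%:~R ^+ r| <= moment_majorant r x.
Proof.
move=> /andP[c_ge0 c_lt1]; rewrite normrX; apply: le_trans (exprD1_le _ (leqnn r)) => //.
apply: lerXn2r; rewrite ?nnegrE //.
have floor_ub := floor_le (x + c); have floor_lb := floorD1_gt (x + c).
have := ler_norm x; have := ler_norm (- x); rewrite intrD in floor_lb.
by rewrite normrN ler_norml => *; apply/andP; split; lra.
Qed.

Section CosAverage.
Variables (R : realType) (q m : nat) (th : R).
Hypothesis q_gt0 : (0 < q)%N.

Definition shift (j : nat) : R := (j%:Z - m%:Z)%:~R / q%:R.

(* [cos_avg n t x] is the [n]-th [t]-derivative of [Re (e^{i (th + t x)} h_shift q m t)]. *)
Definition cos_avg (n : nat) (t x : R) : R :=
  q%:R^-1 * \sum_(j < q) (x - shift j) ^+ n * cos (t * (x - shift j) + (th + n%:R * (pi / 2))).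

Lemma is_derive_cos_avg (n : nat) (t x : R) : is_derive t 1 (cos_avg n ^~ x) (cos_avg n.+1 t x).
Proof.
have -> : cos_avg n ^~ x = q%:R^-1 \*: \sum_(j < q)
    (fun t => (x - shift j) ^+ n * cos (t * (x - shift j) + (th + n%:R * (pi / 2)))).
  by apply/funext => s; rewrite /cos_avg /GRing.scale_fun /= fct_sumE.
eapply is_derive_eq.
  by apply: is_deriveZ; apply: is_derive_sum => j; exact: is_derive_cos_affine.
rewrite /cos_avg; congr (_ * _); apply: eq_bigr => j _; set y := x - shift j.
have -> : t * y + (th + n.+1%:R * (pi / 2)) = t * y + (th + n%:R * (pi / 2)) + pi / 2.
  by rewrite -addn1 natrD; ring.
rewrite cosDpihalf scaler0 add0r addr0 exprSr.
change (y ^+ n * (- sin (t * y + (th + n%:R * (pi / 2))) * (y * 1))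
  = y ^+ n * y * - sin (t * y + (th + n%:R * (pi / 2)))).
ring.
Qed.

Lemma measurable_cos_avg (n : nat) (t : R) : measurable_fun setT (cos_avg n t).
Proof.
have measurable_shifted j : measurable_fun setT (fun x : R => x - shift j).
  by apply: measurable_funB => //; exact: measurable_cst.
apply: measurable_funM; first exact: measurable_cst.
apply: measurable_sum => j; apply: measurable_funM; first exact: measurable_funX.
apply: (measurableT_comp (f := cos)).
  by apply: continuous_measurable_fun; exact: continuous_cos.
apply: measurable_funD; last exact: measurable_cst.
by apply: measurable_funM => //; exact: measurable_cst.
Qed.

Lemma norm_shift_le1 (j : nat) : (m <= q)%N -> (j < q)%N -> `|shift j| <= 1.
Proof.
move=> le_mq lt_jq; rewrite /shift intrB !pmulrn normrM normfV.
have qR_gt0 : (0 : R) < q%:R by rewrite ltr0n.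
rewrite (gtr0_norm qR_gt0) ler_pdivrMr // mul1r ler_norml.
have : (j%:R : R) <= q%:R by rewrite ler_nat ltnW.
have : (m%:R : R) <= q%:R by rewrite ler_nat.
have : (0 : R) <= j%:R by [].
have : (0 : R) <= m%:R by [].
by rewrite -!pmulrn => *; apply/andP; split; lra.
Qed.

Lemma norm_cos_avg_le (r n : nat) (t x : R) : (m <= q)%N -> (n <= r)%N ->
  `|cos_avg n t x| <= moment_majorant r x.
Proof.
move=> le_mq le_nr; have qR_gt0 : (0 : R) < q%:R by rewrite ltr0n.
rewrite /cos_avg normrM normfV (gtr0_norm qR_gt0) ler_pdivrMl //; apply: (le_trans (ler_norm_sum _ _ _)).
apply: (@le_trans _ _ (\sum_(j < q) moment_majorant r x)); last first.
  by rewrite sumr_const card_ord mulr_natl.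
apply: ler_sum => j _; rewrite normrM normrX.
apply: (@le_trans _ _ (`|x - shift j| ^+ n)).
  by rewrite ler_piMr ?exprn_ge0 // ler_norml cos_le1 cos_geN1.
apply: (@le_trans _ _ ((`|x| + 1) ^+ n)); last exact: exprD1_le.
apply: lerXn2r; rewrite ?nnegrE //.
by apply: (le_trans (ler_normB _ _)); rewrite lerD2l norm_shift_le1.
Qed.

Lemma floor_divq_add (N : int) (c : R) : m%:R <= c * q%:R < m%:R + 1 ->
  Num.floor (N%:~R / q%:R + c) = ((N + m%:Z) %/ q%:Z)%Z.
Proof.
move=> /andP[m_le_cq cq_lt_m1].
have qR_gt0 : (0 : R) < q%:R by rewrite ltr0n.
set Z := (N + m%:Z)%Z.
have Z_eq : (N%:~R + m%:R : R) = ((Z %/ q%:Z)%Z)%:~R * q%:R + ((Z %% q%:Z)%Z)%:~R.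
  by rewrite -[m%:R]/(m%:Z%:~R) -intrD -[q%:R]/(q%:Z%:~R) -intrM -intrD -divz_eq.
have rem_ge0 : (0 : R) <= ((Z %% q%:Z)%Z)%:~R by rewrite ler0z modz_ge0 // eqz_nat -lt0n.
have rem_lt : ((Z %% q%:Z)%Z)%:~R + 1 <= (q%:R : R).
  rewrite -[1]/((1%:Z)%:~R) -intrD -[(q%:R : R)]/((q%:Z)%:~R) ler_int.
  by rewrite lezD1 ltz_pmod // ltz_nat.
move: Z_eq rem_ge0 rem_lt; set Q := ((Z %/ q%:Z)%Z)%:~R : R.
set rem := ((Z %% q%:Z)%Z)%:~R : R; move=> Z_eq rem_ge0 rem_lt.
have scaled : q%:R * (N%:~R / q%:R + c - Q) = rem - m%:R + c * q%:R.
  have -> : q%:R * (N%:~R / q%:R + c - Q) = N%:~R + c * q%:R - Q * q%:R.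
    by field; rewrite gt_eqF.
  lra.
apply/eqP; rewrite floor_eq; apply/andP; split.
  by rewrite -subr_ge0 -(pmulr_rge0 _ qR_gt0) scaled; lra.
rewrite -subr_gt0 -(pmulr_rgt0 _ qR_gt0) intrD.
have -> : q%:R * (Q + 1%:~R - (N%:~R / q%:R + c)) = q%:R - q%:R * (N%:~R / q%:R + c - Q).
  by ring.
by rewrite scaled; lra.
Qed.

(* Only the shift [k] with [k = N + m (mod q)] survives the root-of-unity filter, and for it
   [x - shift k = (N + m) %/ q = floor (x + c)]. *)
Lemma sum_cos_avg_2pi (c : R) (r : nat) (x : R) (N : int) :
  m%:R <= c * q%:R < m%:R + 1 -> q%:R * x = N%:~R ->
  \sum_(j < q) cos_avg r (2 * pi * j%:R) x
    = (Num.floor (x + c))%:~R ^+ r * cos (th + r%:R * (pi / 2)).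
Proof.
move=> hc qx_eq; have q_neq0 : (q%:R : R) != 0 by rewrite pnatr_eq0 -lt0n.
have x_eq : x = N%:~R / q%:R by rewrite -qx_eq; field.
set phi := th + r%:R * (pi / 2).
have x_shift (k : nat) : x - shift k = (N + m%:Z - k%:Z)%:~R / q%:R.
  by rewrite x_eq /shift !(intrD, intrN); field.
set Z := (N + m%:Z)%Z.
have sum_j (k : 'I_q) :
    \sum_(j < q) (x - shift k) ^+ r * cos (2 * pi * j%:R * (x - shift k) + phi)
    = (x - shift k) ^+ r * (if (q%:Z %| Z - k%:Z)%Z then q%:R * cos phi else 0).
  by rewrite -mulr_sumr [in X in _ * X]x_shift sum_cos_root_unity.
rewrite /cos_avg -mulr_sumr exchange_big /= (eq_bigr _ (fun k _ => sum_j k)).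
have rem_eq : (`|(Z %% q%:Z)%Z|%N)%:Z = (Z %% q%:Z)%Z by rewrite gez0_abs // modz_ge0 // eqz_nat -lt0n.
have rem_lt : (`|(Z %% q%:Z)%Z|%N < q)%N by rewrite -ltz_nat rem_eq ltz_pmod // ltz_nat.
pose k0 : 'I_q := Ordinal rem_lt.
have dvd_k0 (k : 'I_q) : (q%:Z %| Z - k%:Z)%Z = (k == k0).
  rewrite -eqz_mod_dvd (modz_small (m := k%:Z)); last by rewrite ltz_nat ltn_ord andbT.
  by rewrite -val_eqE /= -rem_eq eqz_nat eq_sym.
rewrite (bigD1 k0) // big1 ?addr0; last by move=> k /negbTE k_neq; rewrite dvd_k0 k_neq mulr0.
have Z_k0 : (Z - k0%:Z = (Z %/ q%:Z)%Z * q%:Z)%Z by rewrite /= rem_eq {1}(divz_eq Z q%:Z) addrK.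
rewrite dvd_k0 eqxx x_shift -/Z Z_k0 intrM -[((q%:Z)%:~R : R)]/(q%:R) mulfK //.
by rewrite x_eq floor_divq_add //= addr0; field.
Qed.

End CosAverage.

Arguments shift {R}.

Section Integration.
Context (R : realType) (d : measure_display) (T : measurableType d) (P : probability T R).

Lemma fine_expectationE (f : T -> R) : fine 'E_P[f] = \int[P]_w f w.
Proof. by rewrite unlock. Qed.

Lemma integrable_normr_le (f G : T -> R) : measurable_fun setT f ->
  (forall w, `|f w| <= G w) -> P.-integrable setT (EFin \o G) -> P.-integrable setT (EFin \o f).
Proof.
move=> mf fG Gi; apply: le_integrable Gi => //; first exact/measurable_EFinP.
by move=> w _ /=; rewrite lee_fin (le_trans (fG w)) // ler_norm.
Qed.

Lemma Rintegral_sum (I : Type) (s : seq I) (f : I -> T -> R) :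
  (forall i, P.-integrable setT (EFin \o f i)) ->
  \int[P]_w (\sum_(i <- s) f i w) = \sum_(i <- s) \int[P]_w f i w.
Proof.
move=> fi; elim: s => [|a s IH].
  by under eq_Rintegral do rewrite big_nil; rewrite big_nil /Rintegral integral0.
rewrite big_cons -IH; under eq_Rintegral do rewrite big_cons.
rewrite RintegralD //; have := integrable_sum measurableT s (P := xpredT) (fun i _ => fi i).
by apply: eq_integrable => // w _ /=; rewrite sumEFin.
Qed.

Lemma Rintegral_ae_eq (f g : T -> R) : measurable_fun setT f -> measurable_fun setT g ->
  {ae P, forall w, f w = g w} -> \int[P]_w f w = \int[P]_w g w.
Proof.
move=> mf mg fg; rewrite /Rintegral; congr fine.
apply: ae_eq_integral => //; try exact/measurable_EFinP.
by apply: filterS fg => w fg_w _; rewrite /= fg_w.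
Qed.

Lemma derive1n_Rintegral (g : nat -> R -> T -> R) (G : T -> R) (r : nat) :
  (forall n (t : R) w, is_derive t 1 (g n ^~ w) (g n.+1 t w)) ->
  (forall n t, measurable_fun setT (g n t)) ->
  (forall n t w, (n <= r)%N -> `|g n t w| <= G w) ->
  P.-integrable setT (EFin \o G) ->
  forall n, (n <= r)%N ->
  derive1n n (fun t => \int[P]_w g 0%N t w) = (fun t => \int[P]_w g n t w).
Proof.
move=> g_derive g_meas g_le_G G_int; elim=> [|n IH] lt_nr; first by rewrite derive1n0.
rewrite derive1nS IH ?(ltnW lt_nr) //; apply/funext => t.
have G_ge0 w : 0 <= G w by apply: le_trans (g_le_G 0%N t w isT).
rewrite (@differentiation_under_integral R d T P (g n) setT measurableT t (t - 1) (t + 1)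
  _ _ _ G G_ge0 G_int).
- apply: eq_Rintegral => w _; rewrite /partial1of2 derive1E.
  by rewrite (@derive_val _ _ _ _ _ _ _ (g_derive n t w)).
- by rewrite /= in_itv /=; apply/andP; split; lra.
- move=> s _; apply: integrable_normr_le G_int => //.
  by move=> w; exact: g_le_G (ltnW lt_nr).
- by move=> s w _ _; case: (g_derive n s w).
- move=> s w _ _; rewrite /partial1of2 derive1E (@derive_val _ _ _ _ _ _ _ (g_derive n s w)).
  exact: g_le_G.
Qed.

Lemma integrable_moment_majorant (X : T -> R) (r : nat) : measurable_fun setT X ->
  ('E_P[fun w => (`|X w| ^+ r)%R] < +oo)%E ->
  P.-integrable setT (EFin \o (moment_majorant r \o X)).
Proof.
move=> mX moment_fin.
have mXr : measurable_fun setT (fun w => `|X w| ^+ r).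
  by apply: measurable_funX; apply: measurableT_comp => //; exact: normr_measurable.
have Xr_int : P.-integrable setT (EFin \o (fun w => `|X w| ^+ r)).
  apply/integrableP; split; first exact/measurable_EFinP.
  under eq_integral do rewrite /= ger0_norm ?exprn_ge0 //.
  by move: moment_fin; rewrite unlock.
have one_int : P.-integrable setT (EFin \o cst (1 : R)) by exact: finite_measure_integrable_cst.
have := integrableZl measurableT (2 ^+ r) (integrableD measurableT one_int Xr_int).
by apply: eq_integrable => // w _ /=.
Qed.

End Integration.

Section FloorMoments.
Context (R : realType) (d : measure_display) (T : measurableType d) (P : probability T R).
Variable X : T -> R.
Hypothesis mX : measurable_fun setT X.

(* [h_q = h_shift q 0] and [tilde h_q = h_shift q (q %/ 2)]. *)
Definition h_shift (q m : nat) (t : R) : R[i] :=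
  (q%:R^-1)%:C * \sum_(j < q) expi (- (t * ((j%:Z - m%:Z)%:~R) / q%:R)).

Lemma measurable_comp_scaled (f : R -> R) (t : R) : continuous f ->
  measurable_fun setT (fun w => f (t * X w)).
Proof.
move=> f_cont; apply: (measurableT_comp (f := f)); first exact: continuous_measurable_fun.
by apply: measurable_funM => //; exact: measurable_cst.
Qed.

Lemma integrable_bounded_comp_scaled (f : R -> R) (t : R) : continuous f -> (forall x, `|f x| <= 1) ->
  P.-integrable setT (EFin \o (fun w => f (t * X w))).
Proof.
move=> f_cont f_le1; apply: (@integrable_normr_le _ _ _ _ _ (cst 1)).
- exact: measurable_comp_scaled.
- by move=> w; exact: f_le1.
- exact: finite_measure_integrable_cst.
Qed.

Lemma Rintegral_trig_comb (q : nat) (a b : 'I_q -> R) (k t : R) :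
  \int[P]_w (k * \sum_(j < q) (a j * cos (t * X w) + b j * sin (t * X w))) =
  k * \sum_(j < q) (a j * \int[P]_w cos (t * X w) + b j * \int[P]_w sin (t * X w)).
Proof.
have cos_int := @integrable_bounded_comp_scaled cos t (@continuous_cos R) (@cos_max R).
have sin_int := @integrable_bounded_comp_scaled sin t (@continuous_sin R) (@sin_max R).
have scaled_int (c : R) f : P.-integrable setT (EFin \o (fun w => f (t * X w))) ->
    P.-integrable setT (EFin \o (fun w => c * f (t * X w))).
  by move=> f_int; apply: eq_integrable (integrableZl measurableT c f_int) => // w _ /=.
have term_int j : P.-integrable setT
    (EFin \o (fun w => a j * cos (t * X w) + b j * sin (t * X w))).
  apply: eq_integrable (integrableD measurableT (scaled_int (a j) _ cos_int)
    (scaled_int (b j) _ sin_int)) => // w _ /=.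
rewrite RintegralZl //; last first.
  have := integrable_sum measurableT (index_enum 'I_q) (P := xpredT) (fun j _ => term_int j).
  by apply: eq_integrable => // w _ /=; rewrite sumEFin.
rewrite Rintegral_sum //; congr (_ * _); apply: eq_bigr => j _.
by rewrite RintegralD // ?scaled_int // !RintegralZl.
Qed.

Lemma expi_shift (q m : nat) (t : R) (j : nat) :
  expi (- (t * ((j%:Z - m%:Z)%:~R) / q%:R)) = cos (t * shift q m j) +i* (- sin (t * shift q m j)).
Proof. by rewrite /expi /shift mulrA cosN sinN. Qed.

Lemma Re_h_shift_charfun (q m : nat) (t : R) :
  complex.Re (h_shift q m t * charfun P X t) = \int[P]_w cos_avg q m 0 0 t (X w).
Proof.
rewrite /h_shift (eq_bigr _ (fun (j : 'I_q) _ => expi_shift q m t j)) sum_complex /charfun.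
rewrite !fine_expectationE -complexr0 -[(_ +i* _) * (_ +i* _)]/(_ +i* _) /=.
have -> : \int[P]_w cos_avg q m 0 0 t (X w) = \int[P]_w (q%:R^-1 * \sum_(j < q)
    (cos (t * shift q m j) * cos (t * X w) + sin (t * shift q m j) * sin (t * X w))).
  apply: eq_Rintegral => w _; rewrite /cos_avg; congr (_ * _); apply: eq_bigr => j _.
  by rewrite expr0 mul1r mul0r !addr0 mulrBr cosB; ring.
by rewrite Rintegral_trig_comb big_split /= -!mulr_suml sumrN; ring.
Qed.

Lemma Im_h_shift_charfun (q m : nat) (t : R) :
  complex.Im (h_shift q m t * charfun P X t) = \int[P]_w cos_avg q m (- (pi / 2)) 0 t (X w).
Proof.
rewrite /h_shift (eq_bigr _ (fun (j : 'I_q) _ => expi_shift q m t j)) sum_complex /charfun.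
rewrite !fine_expectationE -complexr0 -[(_ +i* _) * (_ +i* _)]/(_ +i* _) /=.
have -> : \int[P]_w cos_avg q m (- (pi / 2)) 0 t (X w) = \int[P]_w (q%:R^-1 * \sum_(j < q)
    (- sin (t * shift q m j) * cos (t * X w) + cos (t * shift q m j) * sin (t * X w))).
  apply: eq_Rintegral => w _; rewrite /cos_avg; congr (_ * _); apply: eq_bigr => j _.
  by rewrite expr0 mul1r mul0r !addr0 cosBpihalf mulrBr sinB; ring.
by rewrite Rintegral_trig_comb big_split /= -!mulr_suml sumrN; ring.
Qed.

Lemma measurable_floor_moment (c : R) (r : nat) :
  measurable_fun setT (fun w => (Num.floor (X w + c))%:~R ^+ r : R).
Proof.
have floor_nondecr : nondecreasing_fun (fun x : R => (Num.floor x)%:~R : R).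
  by move=> x y le_xy; rewrite ler_int le_floor.
apply/measurable_funX/(measurableT_comp (f := fun x : R => (Num.floor x)%:~R : R)).
  exact: nondecreasing_measurable floor_nondecr.
by apply: measurable_funD => //; exact: measurable_cst.
Qed.

Section CosAverageMoments.
Variables (q m : nat) (th : R) (r : nat).
Hypotheses (q_gt0 : (0 < q)%N) (le_mq : (m <= q)%N).
Hypothesis moment_fin : ('E_P[fun w => (`|X w| ^+ r)%R] < +oo)%E.

Lemma derive1n_Rintegral_cos_avg :
  derive1n r (fun t => \int[P]_w cos_avg q m th 0 t (X w))
  = (fun t => \int[P]_w cos_avg q m th r t (X w)).
Proof.
apply: (derive1n_Rintegral (g := fun n t w => cos_avg q m th n t (X w))
  (G := moment_majorant r \o X) (r := r)) => //.
- by move=> n t w; exact: is_derive_cos_avg.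
- by move=> n t; exact: measurableT_comp (measurable_cos_avg _ _ _ _ _) mX.
- by move=> n t w le_nr /=; apply: norm_cos_avg_le.
- exact: integrable_moment_majorant.
Qed.

Lemma sum_Rintegral_cos_avg_2pi (c : R) :
  m%:R <= c * q%:R < m%:R + 1 -> 0 <= c < 1 ->
  {ae P, forall w, (q%:R * X w) \is a Num.int} ->
  \sum_(j < q) \int[P]_w cos_avg q m th r (2 * pi * j%:R) (X w) =
  (\int[P]_w ((Num.floor (X w + c))%:~R ^+ r)) * cos (th + r%:R * (pi / 2)).
Proof.
move=> hc c01 qX_int.
have G_int := integrable_moment_majorant mX moment_fin.
have cos_avg_meas n t : measurable_fun setT (fun w => cos_avg q m th n t (X w)).
  exact: measurableT_comp (measurable_cos_avg _ _ _ _ _) mX.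
rewrite -Rintegral_sum; last first.
  by move=> j; apply: integrable_normr_le G_int => // w; apply: norm_cos_avg_le.
rewrite -RintegralZr //; last first.
  apply: integrable_normr_le G_int; first exact: measurable_floor_moment.
  by move=> w; exact: norm_floor_expr_le.
apply: Rintegral_ae_eq.
- by apply: measurable_sum => j; exact: cos_avg_meas.
- by apply: measurable_funM; [exact: measurable_floor_moment|exact: measurable_cst].
- apply: filterS qX_int => w /intrP[N qX_eq].
  by apply: sum_cos_avg_2pi qX_eq.
Qed.

End CosAverageMoments.

Lemma floor_moment_charfun (q m : nat) (c : R) (r : nat) : (0 < q)%N ->
  m%:R <= c * q%:R < m%:R + 1 -> 0 <= c < 1 ->
  {ae P, forall w, (q%:R * X w) \is a Num.int} ->
  ('E_P[fun w => (`|X w| ^+ r)%R] < +oo)%E ->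
  (fine ('E_P[fun w => (((Num.floor (X w + c))%:~R : R) ^+ r)%R])%E)%:C
    = 'i ^- r * \sum_(j < q) cderive r (fun t => h_shift q m t * charfun P X t) (2 * pi * j%:R).
Proof.
move=> q_gt0 hc c01 qX_int moment_fin.
have le_mq : (m <= q)%N.
  have /andP[_ c_lt1] := c01; have qR_gt0 : (0 : R) < q%:R by rewrite ltr0n.
  have : c * q%:R < q%:R by rewrite -[X in _ < X]mul1r ltr_pM2r.
  by move: hc => /andP[m_le_cq _] ?; apply/ltnW; rewrite -(ltr_nat R); lra.
have Re_eq : (fun s => complex.Re (h_shift q m s * charfun P X s))
    = (fun t => \int[P]_w cos_avg q m 0 0 t (X w)).
  by apply/funext => s; exact: Re_h_shift_charfun.
have Im_eq : (fun s => complex.Im (h_shift q m s * charfun P X s))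
    = (fun t => \int[P]_w cos_avg q m (- (pi / 2)) 0 t (X w)).
  by apply/funext => s; exact: Im_h_shift_charfun.
have cderive_eq t : cderive r (fun t => h_shift q m t * charfun P X t) t =
    (\int[P]_w cos_avg q m 0 r t (X w)) +i* (\int[P]_w cos_avg q m (- (pi / 2)) r t (X w)).
  by rewrite /cderive Re_eq Im_eq !derive1n_Rintegral_cos_avg.
rewrite (eq_bigr _ (fun j _ => cderive_eq _)) sum_complex.
rewrite !(sum_Rintegral_cos_avg_2pi _ q_gt0 le_mq moment_fin hc c01 qX_int).
rewrite fine_expectationE add0r addrC cosBpihalf; set A := \int[P]_w _.
have -> : (A * cos (r%:R * (pi / 2))) +i* (A * sin (r%:R * (pi / 2))) = A%:C * 'i%R ^+ r.
  rewrite -expi_pihalf -expi_natrM /expi -complexr0 -[(_ +i* _) * (_ +i* _)]/(_ +i* _) /=.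
  by congr (_ +i* _); ring.
by rewrite mulrCA mulVf ?mulr1 // expf_neq0 // neq0Ci.
Qed.

End FloorMoments.

Lemma h_q_shift0 (R : realType) (q : nat) (t : R) : h_q q t = h_shift q 0 t.
Proof.
rewrite /h_q /h_shift; congr (_ * _); apply: eq_bigr => j _.
by rewrite subr0 -[((j : nat)%:Z)%:~R]/((j : nat)%:R).
Qed.

Lemma ht_q_shift_half (R : realType) (q : nat) (t : R) : ht_q q t = h_shift q (q %/ 2) t.
Proof.
rewrite /ht_q /h_shift; case: ifPn => // /negbNE q_odd.
suff -> : ((q - 1) %/ 2 = q %/ 2)%N by [].
by rewrite {1}(divn_eq q 2) modn2 q_odd addnK mulnK.
Qed.

Lemma natr_divn2_bounds (R : realType) (q : nat) :
  ((q %/ 2)%:R : R) <= 2^-1 * (q%:R : R) < ((q %/ 2)%:R : R) + 1.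
Proof.
have q_eq : (q%:R : R) = (q %/ 2)%:R * 2 + (q %% 2)%:R by rewrite {1}(divn_eq q 2) natrD natrM.
have : ((q %% 2)%:R : R) <= 1 by rewrite (ler_nat R _ 1) modn2; case: odd.
by have : (0 : R) <= (q %% 2)%:R by []; move=> *; apply/andP; split; lra.
Qed.

Theorem theorem2 (R : realType) (d : measure_display) (T : measurableType d)
    (P : probability T R) (X : {RV P >-> R}) (q : nat) :
  (1 <= q)%N ->
  {ae P, forall w, (q%:R * X w) \is a Num.int} ->
  forall r : nat, (1 <= r)%N ->
  ('E_P[fun w => (`|X w| ^+ r)%R] < +oo)%E ->
  ((fine ('E_P[fun w => (((Num.floor (X w))%:~R : R) ^+ r)%R])%E)%:C
     = 'i ^- r * \sum_(j < q)
         cderive r (fun t => h_q q t * charfun P X t) (2 * pi * j%:R)%R)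
  /\
  ((fine ('E_P[fun w => (((Num.floor (X w + 2^-1))%:~R : R) ^+ r)%R])%E)%:C
     = 'i ^- r * \sum_(j < q)
         cderive r (fun t => ht_q q t * charfun P X t) (2 * pi * j%:R)%R).
Proof.
move=> q_gt0 qX_int r _ moment_fin; have mX := measurable_funPT X.
split.
- under eq_fun do rewrite -[X _]addr0.
  under [in RHS]eq_bigr do under eq_fun do rewrite h_q_shift0.
  by apply: (floor_moment_charfun mX); rewrite // ?mul0r ?add0r lexx ltr01.
- under [in RHS]eq_bigr do under eq_fun do rewrite ht_q_shift_half.
  apply: (floor_moment_charfun mX) => //; first exact: natr_divn2_bounds.
  by apply/andP; split; lra.
Qed.
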